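(* Let $x^*$ be a stationary point of $\min_xF(x)=f(x)+\Psi(x)$, i.e. $0\in\nabla f(x^* )+\partial\Psi(x^* )$. Suppose $\Psi$ is partly smooth at $x^*$ relative to a manifold $\mathcal{M}$, with a local $\mathcal{C}^2$ parameterization $\phi$ of $\mathcal{M}$ and a point $y^*$ with $\phi(y^* )=x^*$, and let $F_\phi:=F\circ\phi$. Assume that there is a neighborhood $U$ of $y^*$ such that $V\succeq0$ for every $V\in\partial(\nabla F_\phi)(y)$ and every $y\in U$, and that $\nabla F_\phi$ is strongly semismooth at $y^*$. Fix $c>0$ and $\rho\in(0,1]$. For $y^t\in U$ define $g^t:=\nabla F_\phi(y^t)$, $\mu_t:=c\|g^t\|^{\rho}$, $H_t:=V_t+\mu_tI$ with $V_t\in\partial(\nabla F_\phi)(y^t)$, and $d_t:=\|y^t-y^*\|$. Then for $y^t\in U$, any $q^t$ satisfying $$\|H_tq^t+g^t\|\le0.1\min\{\|g^t\|,\|g^t\|^{1+\rho}\}$$ obeys $$\|q^t\|\le2d_t+\mu_t^{-1}O(d_t^2)+0.1\mu_t^{-1}\|g^t\|^{1+\rho},$$ where $O(\cdot)$ is with respect to $d_t\to0$.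
   Context: Standing setting: $\mathcal{H}$ is a Euclidean space; $f:\mathcal{H}\to\mathbb{R}$ is continuously differentiable with Lipschitz gradient; $\Psi:\mathcal{H}\to(-\infty,\infty]$ is convex, proper, lower semicontinuous. Partial smoothness: $\Psi$ is partly smooth at $x^*$ relative to $\mathcal{M}\ni x^*$ if $\partial\Psi(x^* )\ne\emptyset$ and (i) near $x^*$, $\mathcal{M}$ is a $\mathcal{C}^2$ manifold and $\Psi|_{\mathcal{M}}$ is $\mathcal{C}^2$; (ii) the affine span of $\partial\Psi(x^* )$ is a translate of the normal space to $\mathcal{M}$ at $x^*$; (iii) $\partial\Psi$ is continuous at $x^*$ relative to $\mathcal{M}$; (iv) $\Psi$ is regular at points of $\mathcal{M}$ near $x^*$ with nonempty subdifferential. A local parameterization of a $p$-dimensional $\mathcal{C}^2$ manifold $\mathcal{M}$ around $x^*$ is a $\mathcal{C}^2$ map $\phi:\mathbb{R}^p\to\mathcal{M}$ with $\phi(y^* )=x^*$ and injective derivative at $y^*$, describing a neighborhood of $x^*$ in $\mathcal{M}$. $\partial(\nabla F_\phi)(y)$ is the (Clarke) generalized Jacobian of $\nabla F_\phi$ at $y$ (generalized Hessian of $F_\phi$). $\nabla F_\phi$ is strongly semismooth at $y^*$ if it is directionally differentiable at $y^*$ and for any $V\in\partial(\nabla F_\phi)(y^*+\Delta y)$, as $\Delta y\to0$, $\nabla F_\phi(y^*+\Delta y)-\nabla F_\phi(y^* )-V\Delta y=O(\|\Delta y\|^2)$. *)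

From HB Require Import structures.
From mathcomp Require Import all_boot all_order all_algebra.
From mathcomp Require Import all_classical all_reals all_analysis.
Set Implicit Arguments. Unset Strict Implicit. Unset Printing Implicit Defensive.
Import Order.TTheory GRing.Theory Num.Theory.
Import numFieldNormedType.Exports.
Local Open Scope classical_set_scope.
Local Open Scope ring_scope.

Definition dotv {R : realType} {n : nat} (u v : 'cV[R]_n) : R :=
  \sum_(i < n) u i 0 * v i 0.
Definition enorm {R : realType} {n : nat} (u : 'cV[R]_n) : R :=
  Num.sqrt (dotv u u).
Definition ebasis {R : realType} {p : nat} (j : 'I_p) : 'cV[R]_p := delta_mx j 0.

Definition partial {R : realType} {p : nat} {W : normedModType R}
  (G : 'cV[R]_p -> W) (j : 'I_p) (y : 'cV[R]_p) : W := derive G y (ebasis j).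

Definition C1_on {R : realType} {p : nat} {W : normedModType R}
  (A : set 'cV[R]_p) (G : 'cV[R]_p -> W) : Prop :=
  open A /\
  forall y, A y -> forall j, derivable G y (ebasis j) /\
                            {for y, continuous (partial G j)}.

Definition C2_on {R : realType} {p : nat} {W : normedModType R}
  (A : set 'cV[R]_p) (G : 'cV[R]_p -> W) : Prop :=
  C1_on A G /\ forall j, C1_on A (partial G j).

Definition grad {R : realType} {p : nat} (F : 'cV[R]_p -> R^o) (y : 'cV[R]_p)
  : 'cV[R]_p := \col_(i < p) partial F i y.

Definition jacobian {R : realType} {p m : nat} (G : 'cV[R]_p -> 'cV[R]_m)
  (y : 'cV[R]_p) : 'M[R]_(m, p) := \matrix_(i < m, j < p) partial G j y i 0.

Definition Bjac {R : realType} {p : nat} (G : 'cV[R]_p -> 'cV[R]_p)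
  (y : 'cV[R]_p) : set 'M[R]_p :=
  [set M | exists yk : nat -> 'cV[R]_p,
      yk @ \oo --> y /\ (forall k, differentiable G (yk k)) /\
      (fun k => jacobian G (yk k)) @ \oo --> M].

Definition convhull {R : realType} {p : nat} (S : set 'M[R]_p) : set 'M[R]_p :=
  [set M | exists (k : nat) (w : 'I_k -> R) (s : 'I_k -> 'M[R]_p),
      (forall i, 0 <= w i) /\ \sum_(i < k) w i = 1 /\ (forall i, S (s i)) /\
      M = \sum_(i < k) w i *: s i].

Definition clarke_jac {R : realType} {p : nat} (G : 'cV[R]_p -> 'cV[R]_p)
  (y : 'cV[R]_p) : set 'M[R]_p := convhull (Bjac G y).

Definition psd {R : realType} {p : nat} (V : 'M[R]_p) : Prop :=
  forall u : 'cV[R]_p, 0 <= dotv u (V *m u).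

Definition strongly_semismooth {R : realType} {p : nat}
  (G : 'cV[R]_p -> 'cV[R]_p) (y : 'cV[R]_p) : Prop :=
  (forall h : 'cV[R]_p,
      cvg ((fun t : R => t^-1 *: (G (y + t *: h) - G y)) @ 0^'+)) /\
  exists C : R, exists2 delta : R, 0 < delta &
    forall dy : 'cV[R]_p, enorm dy < delta ->
      forall V, clarke_jac G (y + dy) V ->
        enorm (G (y + dy) - G y - V *m dy) <= C * enorm dy ^+ 2.

Definition eproper {R : realType} {n : nat} (Psi : 'cV[R]_n -> \bar R) : Prop :=
  (forall x, Psi x != -oo%E) /\ exists x, Psi x \is a fin_num.

Definition econvex {R : realType} {n : nat} (Psi : 'cV[R]_n -> \bar R) : Prop :=
  forall (x y : 'cV[R]_n) (t : R), 0 < t < 1 ->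
    (Psi (t *: x + (1 - t) *: y)%R <= t%:E * Psi x + (1 - t)%:E * Psi y)%E.

(* convex subdifferential (empty outside the domain) *)
Definition subdiff {R : realType} {n : nat} (Psi : 'cV[R]_n -> \bar R)
  (x : 'cV[R]_n) : set 'cV[R]_n :=
  [set v | Psi x \is a fin_num /\
           forall z, (Psi x + (dotv v (z - x)%R)%:E <= Psi z)%E].

Definition frechet_subdiff {R : realType} {n : nat} (Psi : 'cV[R]_n -> \bar R)
  (x : 'cV[R]_n) : set 'cV[R]_n :=
  [set v | Psi x \is a fin_num /\
    forall eps : R, 0 < eps -> exists2 delta : R, 0 < delta &
      forall z, enorm (z - x) < delta ->
        (Psi x + (dotv v (z - x) - eps * enorm (z - x))%R%:E <= Psi z)%E].

Definition limiting_subdiff {R : realType} {n : nat} (Psi : 'cV[R]_n -> \bar R)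
  (x : 'cV[R]_n) : set 'cV[R]_n :=
  [set v | Psi x \is a fin_num /\
    exists (xk vk : nat -> 'cV[R]_n),
      xk @ \oo --> x /\ (fun k => fine (Psi (xk k))) @ \oo --> fine (Psi x) /\
      (forall k, Psi (xk k) \is a fin_num) /\
      (forall k, frechet_subdiff Psi (xk k) (vk k)) /\ vk @ \oo --> v].

Definition horizon_subdiff {R : realType} {n : nat} (Psi : 'cV[R]_n -> \bar R)
  (x : 'cV[R]_n) : set 'cV[R]_n :=
  [set v | Psi x \is a fin_num /\
    exists (xk vk : nat -> 'cV[R]_n) (lk : nat -> R),
      xk @ \oo --> x /\ (fun k => fine (Psi (xk k))) @ \oo --> fine (Psi x) /\
      (forall k, Psi (xk k) \is a fin_num) /\
      (forall k, 0 < lk k) /\ lk @ \oo --> 0 /\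
      (forall k, frechet_subdiff Psi (xk k) (vk k)) /\
      (fun k => lk k *: vk k) @ \oo --> v].

Definition horizon_cone {R : realType} {n : nat} (C : set 'cV[R]_n) : set 'cV[R]_n :=
  [set v : 'cV[R]_n | (C !=set0 /\ v = 0) \/
    exists (ck : nat -> 'cV[R]_n) (lk : nat -> R),
      (forall k, C (ck k)) /\ (forall k, 0 < lk k) /\ lk @ \oo --> 0 /\
      (fun k => lk k *: ck k) @ \oo --> v].

(* subdifferential regularity (Rockafellar-Wets Def. 7.25), through its
   characterization Cor. 8.11 (valid when the subdifferential is nonempty):
   Psi finite and locally lsc at x, limiting = regular subdifferential, and
   horizon subdifferential = horizon cone of the regular subdifferential. *)
Definition sregular {R : realType} {n : nat} (Psi : 'cV[R]_n -> \bar R)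
  (x : 'cV[R]_n) : Prop :=
  Psi x \is a fin_num /\
  (exists2 O, nbhs x O & forall z, O z -> forall a : R, (a%:E < Psi z)%E ->
      exists2 V, nbhs z V & forall w, V w -> (a%:E < Psi w)%E) /\
  limiting_subdiff Psi x = frechet_subdiff Psi x /\
  horizon_subdiff Psi x = horizon_cone (frechet_subdiff Psi x).

Definition local_param {R : realType} {n p : nat} (M : set 'cV[R]_n)
  (phi : 'cV[R]_p -> 'cV[R]_n) (ystar : 'cV[R]_p) (xstar : 'cV[R]_n) : Prop :=
  C2_on setT phi /\ (forall y, M (phi y)) /\ phi ystar = xstar /\
  (forall a : 'cV[R]_p, jacobian phi ystar *m a = 0 -> a = 0) /\
  exists2 W, nbhs ystar W & exists2 O, nbhs xstar O &
    {in W &, injective phi} /\ phi @` W = M `&` O.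

(* normal space to M at phi y* : orthogonal complement of the tangent space
   = range of the derivative of phi at y* *)
Definition normal_space {R : realType} {n p : nat}
  (phi : 'cV[R]_p -> 'cV[R]_n) (ystar : 'cV[R]_p) : set 'cV[R]_n :=
  [set v | forall j, dotv v (partial phi j ystar) = 0].

Definition affspan {R : realType} {n : nat} (S : set 'cV[R]_n) : set 'cV[R]_n :=
  [set x | exists (k : nat) (w : 'I_k -> R) (s : 'I_k -> 'cV[R]_n),
      \sum_(i < k) w i = 1 /\ (forall i, S (s i)) /\ x = \sum_(i < k) w i *: s i].

Definition partly_smooth {R : realType} {n p : nat} (Psi : 'cV[R]_n -> \bar R)
  (M : set 'cV[R]_n) (phi : 'cV[R]_p -> 'cV[R]_n) (ystar : 'cV[R]_p)
  (xstar : 'cV[R]_n) : Prop :=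
  subdiff Psi xstar !=set0 /\
  (* (i) M is a C^2 manifold near x* (via phi) and Psi|M is C^2 near x* *)
  local_param M phi ystar xstar /\
  (exists2 W, nbhs ystar W &
     (forall y, W y -> Psi (phi y) \is a fin_num) /\
     C2_on (interior W) (fun y => (fine (Psi (phi y)) : R^o))) /\
  (* (ii) affine span of the subdifferential is a translate of the normal space *)
  (exists v0, affspan (subdiff Psi xstar) =
              [set v0 + w | w in normal_space phi ystar]) /\
  (* (iii) continuity of the subdifferential at x* relative to M *)
  (forall (xk vk : nat -> 'cV[R]_n) v, (forall k, M (xk k)) ->
     xk @ \oo --> xstar -> (forall k, subdiff Psi (xk k) (vk k)) ->
     vk @ \oo --> v -> subdiff Psi xstar v) /\
  (forall v (xk : nat -> 'cV[R]_n), subdiff Psi xstar v ->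
     (forall k, M (xk k)) -> xk @ \oo --> xstar ->
     exists vk : nat -> 'cV[R]_n,
       (\forall k \near \oo, subdiff Psi (xk k) (vk k)) /\ vk @ \oo --> v) /\
  (* (iv) regularity with nonempty subdifferential at points of M near x* *)
  (exists2 eps : R, 0 < eps & forall x, M x -> enorm (x - xstar) < eps ->
      sregular Psi x /\ subdiff Psi x !=set0).

From HB Require Import structures.
From mathcomp Require Import all_boot all_order all_algebra.
From mathcomp Require Import all_classical all_reals all_analysis.
From mathcomp Require Import lra.
Import Order.TTheory GRing.Theory Num.Theory.
Import numFieldNormedType.Exports.
Local Open Scope classical_set_scope.
Local Open Scope ring_scope.

(* Write [v] for the subgradient of [Psi] at [xstar] with [grad f xstar + v = 0].  The
   subgradient inequality makes [Psi o phi + <grad f xstar, phi>] minimal at [ystar]; since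
   [f] has continuous partial derivatives the chain rule applies to [f o phi], and the
   directional derivatives of that function are those of [F_phi], so [grad F_phi ystar = 0].
   Strong semismoothness then gives [|g - V (y - ystar)| <= C d^2].  Finally, for
   [w = q + (y - ystar)] we have [H w = (H q + g) - (g - V (y - ystar)) + mu (y - ystar)],
   while [V >= 0] gives [mu |w| <= |H w|]; together with [|q| <= |w| + d] this is the bound. *)

Section EuclideanNorm.
Context {R : realType} {p : nat}.
Implicit Types u v w : 'cV[R]_p.

Lemma dotvC u v : dotv u v = dotv v u.
Proof. by apply: eq_bigr => i _; rewrite mulrC. Qed.

Lemma dotvDr u v w : dotv u (v + w) = dotv u v + dotv u w.
Proof. by rewrite /dotv -big_split; apply: eq_bigr => i _; rewrite mxE mulrDr. Qed.

Lemma dotvZr (a : R) u v : dotv u (a *: v) = a * dotv u v.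
Proof. by rewrite /dotv mulr_sumr; apply: eq_bigr => i _; rewrite mxE mulrCA. Qed.

Lemma dotvNr u v : dotv u (- v) = - dotv u v.
Proof. by rewrite -scaleN1r dotvZr mulN1r. Qed.

Lemma dotvDl u v w : dotv (v + w) u = dotv v u + dotv w u.
Proof. by rewrite dotvC dotvDr !(dotvC u). Qed.

Lemma dotvZl (a : R) u v : dotv (a *: v) u = a * dotv v u.
Proof. by rewrite dotvC dotvZr dotvC. Qed.

Lemma dotvNl u v : dotv (- v) u = - dotv v u.
Proof. by rewrite dotvC dotvNr dotvC. Qed.

Lemma dotvv_ge0 u : 0 <= dotv u u.
Proof. by apply: sumr_ge0 => i _; rewrite -expr2 sqr_ge0. Qed.

Lemma dotvv_eq0 u : dotv u u = 0 -> u = 0.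
Proof.
move=> /eqP; rewrite psumr_eq0 => [/allP u0|i _]; last by rewrite -expr2 sqr_ge0.
apply/matrixP => i j; rewrite (ord1 j) mxE.
by have := u0 i (mem_index_enum _); rewrite -expr2 sqrf_eq0 => /eqP.
Qed.

Lemma enorm_ge0 u : 0 <= enorm u.
Proof. exact: sqrtr_ge0. Qed.

Lemma sqr_enorm u : enorm u ^+ 2 = dotv u u.
Proof. by rewrite sqr_sqrtr // dotvv_ge0. Qed.

Lemma enorm_eq0 u : enorm u = 0 -> u = 0.
Proof. by move=> u0; apply: dotvv_eq0; rewrite -sqr_enorm u0 expr0n. Qed.

Lemma enormZ (a : R) u : enorm (a *: u) = `|a| * enorm u.
Proof.
by rewrite /enorm dotvZl dotvZr mulrA -expr2 sqrtrM ?sqr_ge0 // sqrtr_sqr.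
Qed.

Lemma enormN u : enorm (- u) = enorm u.
Proof. by rewrite -scaleN1r enormZ normrN normr1 mul1r. Qed.

Lemma cauchy_schwarz u v : dotv u v <= enorm u * enorm v.
Proof.
have [/enorm_eq0 ->|nu] := eqVneq (enorm u) 0.
  by rewrite /dotv big1 => [|i _]; rewrite ?mxE ?mul0r // mulr_ge0 ?enorm_ge0.
have [/enorm_eq0 ->|nv] := eqVneq (enorm v) 0.
  by rewrite /dotv big1 => [|i _]; rewrite ?mxE ?mulr0 // mulr_ge0 ?enorm_ge0.
have a0 : 0 < enorm u by rewrite lt_def nu enorm_ge0.
have b0 : 0 < enorm v by rewrite lt_def nv enorm_ge0.
have := dotvv_ge0 (enorm v *: u - enorm u *: v).
rewrite !(dotvDl, dotvDr, dotvNl, dotvNr, dotvZl, dotvZr) -!sqr_enorm (dotvC v u).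
move=> sq_ge0; have ab0 := mulr_gt0 a0 b0; rewrite -(ler_pM2l ab0); nra.
Qed.

Lemma ler_enormD u v : enorm (u + v) <= enorm u + enorm v.
Proof.
rewrite -(ler_pXn2r (n := 2)) ?nnegrE ?addr_ge0 ?enorm_ge0 //.
rewrite sqr_enorm !(dotvDl, dotvDr) -!sqr_enorm (dotvC v u).
by have := cauchy_schwarz u v; nra.
Qed.

Lemma psd_shift_enorm_ge {V : 'M[R]_p} {mu : R} w : psd V -> 0 <= mu ->
  mu * enorm w <= enorm ((V + mu%:M) *m w).
Proof.
move=> V_psd mu0; have [w0|w_neq0] := eqVneq (enorm w) 0.
  by rewrite w0 mulr0 enorm_ge0.
have w_gt0 : 0 < enorm w by rewrite lt_def w_neq0 enorm_ge0.
have := cauchy_schwarz w ((V + mu%:M) *m w).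
rewrite mulmxDl mul_scalar_mx dotvDr dotvZr -sqr_enorm => cs.
by rewrite -(ler_pM2l w_gt0); have := V_psd w; nra.
Qed.

Lemma psd_shift_solution_le {V : 'M[R]_p} {mu A B : R} {q g dy : 'cV[R]_p} :
  psd V -> 0 < mu ->
  enorm ((V + mu%:M) *m q + g) <= A -> enorm (g - V *m dy) <= B ->
  enorm q <= 2 * enorm dy + mu^-1 * B + mu^-1 * A.
Proof.
move=> V_psd mu0 resA semiB; set w := q + dy.
have Hw : (V + mu%:M) *m w = ((V + mu%:M) *m q + g) - (g - V *m dy) + mu *: dy.
  rewrite mulmxDr (mulmxDl V _ dy) mul_scalar_mx opprB addrA.
  by congr (_ + _); rewrite -addrA subrKC.
have Hw_le : mu * enorm w <= A + B + mu * enorm dy.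
  apply: le_trans (psd_shift_enorm_ge w V_psd (ltW mu0)) _.
  rewrite Hw; apply: le_trans (ler_enormD _ _) _.
  rewrite enormZ (ger0_norm (ltW mu0)) lerD2r.
  by apply: le_trans (ler_enormD _ _) _; rewrite enormN lerD.
have q_le : enorm q <= enorm w + enorm dy.
  by rewrite -[q](addrK dy) -/w; apply: le_trans (ler_enormD _ _) _; rewrite !enormN.
rewrite -(ler_pM2l mu0) in q_le.
rewrite -(ler_pM2l mu0) !mulrDr !mulrA mulfV ?gt_eqF // !mul1r; nra.
Qed.

End EuclideanNorm.

Section ColumnNorm.
Context {R : realType} {n : nat}.
Implicit Type v : 'cV[R]_n.

Lemma ler_norm_col_entry v i : `|v i 0| <= `|v|.
Proof. by rewrite [leRHS]/Num.Def.normr /= mx_normrE; exact: (le_bigmax _ _ (i, 0)). Qed.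

Lemma ler_col_norm v c : 0 <= c -> (forall i, `|v i 0| <= c) -> `|v| <= c.
Proof.
move=> c0 entry_le.
rewrite /Num.Def.normr /= mx_normrE (bigmax_le _ c0) //= => -[i j] _.
by rewrite (ord1 j); exact: entry_le.
Qed.

Lemma cvg_dotvr {T : Type} {F : set_system T} {FF : Filter F} (G : 'cV[R]_n)
    {u : T -> 'cV[R]_n} {l : 'cV[R]_n} :
  u @ F --> l -> dotv G (u x) @[x --> F] --> dotv G l.
Proof.
move=> ul; apply: (cvg_big add_continuous) => i _.
apply: cvgM; first exact: cvg_cst.
exact: (cvg_comp _ _ ul (@coord_continuous _ _ _ i 0 l)).
Qed.

End ColumnNorm.

Section FirstOrderApproximation.
Context {R : realType} {n : nat} {f : 'cV[R]_n -> R^o}.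
Hypothesis f_partial : forall z j, derivable f z (ebasis j).

Definition col_prefix (k : nat) (w : 'cV[R]_n) : 'cV[R]_n :=
  \col_(j < n) (if (j < k)%N then w j 0 else 0).

Lemma col_prefix0 w : col_prefix 0 w = 0.
Proof. by apply/matrixP => i j; rewrite !mxE. Qed.

Lemma col_prefix_full w : col_prefix n w = w.
Proof. by apply/matrixP => i j; rewrite (ord1 j) !mxE ltn_ord. Qed.

Lemma col_prefixS w (i : 'I_n) :
  col_prefix i.+1 w = col_prefix i w + w i 0 *: ebasis i.
Proof.
apply/matrixP => j k; rewrite (ord1 k) !mxE /= eqxx andbT.
case: (ltngtP j i) => [ji|ij|/val_inj ->].
- by rewrite (ltn_eqF ji : (j == i) = false) ltnS (ltnW ji) mulr0 addr0.
- by rewrite (gtn_eqF ij : (j == i) = false) ltnNge ij /= mulr0 addr0.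
- by rewrite ltnSn eqxx mulr1 add0r.
Qed.

Lemma is_derive_coord_line (z : 'cV[R]_n) (i : 'I_n) (t : R) :
  is_derive t 1 (fun s : R => f (z + s *: ebasis i) : R)
            (partial f i (z + t *: ebasis i)).
Proof.
set g := fun s : R => _.
have E : (fun h : R => h^-1 *: ((g \o shift t) (h *: 1) - g t)) =
          (fun h : R => h^-1 *: ((f \o shift (z + t *: ebasis i)) (h *: ebasis i)
                                 - f (z + t *: ebasis i))).
  apply/funext => h; rewrite /g /=; congr (_ *: (f _ - _)).
  by rewrite [h%:A]mulr1 scalerDl addrCA.
by split; rewrite /derivable /derive E //; exact: f_partial.
Qed.

Lemma coord_mvt (z : 'cV[R]_n) (i : 'I_n) (s : R) :
  exists2 th : R, `|th| <= `|s| &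
    f (z + s *: ebasis i) - f z = s * partial f i (z + th *: ebasis i).
Proof.
set g := fun s : R => f (z + s *: ebasis i) : R.
have g_cont a b : {within `[a, b], continuous g}.
  apply: derivable_within_continuous => t _.
  by have [] := is_derive_coord_line z i t.
have [s0|s0] := leP 0 s.
  have [c] := MVT_segment s0 (fun t _ => is_derive_coord_line z i t) (g_cont 0 s).
  rewrite in_itv /= => /andP[c0 cs]; rewrite /g scale0r addr0 subr0 => ->.
  by exists c; [rewrite !ger0_norm // (le_trans c0 cs) | rewrite mulrC].
have [c] := MVT_segment (ltW s0) (fun t _ => is_derive_coord_line z i t) (g_cont s 0).
rewrite in_itv /= => /andP[sc c0]; rewrite /g scale0r addr0 sub0r => g_diff.
exists c; first by rewrite !ler0_norm ?lerN2 // ltW.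
by rewrite -[LHS]opprB g_diff mulrN opprK mulrC.
Qed.

(* Telescope along the coordinate axes and apply the mean value theorem on each segment. *)
Lemma first_order_error_le (x : 'cV[R]_n) (eps delta : R) :
  0 <= eps ->
  (forall z, `|z - x| < delta -> forall i, `|partial f i z - partial f i x| <= eps) ->
  forall w, `|w| < delta ->
  `|f (x + w) - f x - dotv (grad f x) w| <= n%:R * eps * `|w|.
Proof.
move=> eps0 near_x w w_small.
set u := fun k : nat => f (x + col_prefix k w).
have -> : f (x + w) - f x = \sum_(i < n) (u i.+1 - u i).
  rewrite -(big_mkord xpredT (fun i => u i.+1 - u i)) telescope_sumr //.
  by rewrite /u col_prefix_full col_prefix0 addr0.
have -> : dotv (grad f x) w = \sum_(i < n) w i 0 * partial f i x.
  by apply: eq_bigr => i _; rewrite mxE mulrC.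
rewrite -sumrB; apply: (le_trans (ler_norm_sum _ _ _)).
have -> : n%:R * eps * `|w| = \sum_(i < n) (eps * `|w|).
  by rewrite sumr_const card_ord -mulrA mulr_natl.
apply: ler_sum => i _.
rewrite /u col_prefixS addrA.
have [th th_le ->] := coord_mvt (x + col_prefix i w) i (w i 0).
rewrite -mulrBr normrM mulrC; apply: ler_pM; rewrite ?normr_ge0 ?ler_norm_col_entry //.
apply: near_x; rewrite addrAC [x + _ - x]addrC addKr.
apply: le_lt_trans w_small; apply: ler_col_norm => [|j]; first exact: normr_ge0.
rewrite !mxE eqxx andbT; case: eqP => [->|_].
- by rewrite ltnn add0r mulr1 (le_trans th_le) ?ler_norm_col_entry.
- rewrite mulr0 addr0; case: ifP => _; first exact: ler_norm_col_entry.
  by rewrite normr0 normr_ge0.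
Qed.

Lemma first_order_approx (x : 'cV[R]_n) :
  (forall j, {for x, continuous (partial f j)}) ->
  forall eps : R, 0 < eps -> exists2 delta : R, 0 < delta &
  forall w, `|w| < delta -> `|f (x + w) - f x - dotv (grad f x) w| <= eps * `|w|.
Proof.
move=> f_cont eps eps0.
have n1 : 0 < n%:R + 1 :> R by rewrite ltr_wpDl.
have e'0 : 0 < eps / (n%:R + 1) by rewrite divr_gt0.
have : \forall z \near x, forall i, `|partial f i x - partial f i z| <= eps / (n%:R + 1).
  exact: filter_forall (fun i => (cvgrPdist_le _ _).1 (f_cont i) _ e'0).
move=> /nbhs_normP [d /= d0 near_x]; exists d => // w w_small.
apply: le_trans (@first_order_error_le x _ d (ltW e'0) _ w w_small) _.
  by move=> z zd i; rewrite distrC; apply: near_x; rewrite /= distrC.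
rewrite ler_wpM2r ?normr_ge0 // mulrA ler_pdivrMr //; nra.
Qed.

End FirstOrderApproximation.

Section ChainRule.
Context {R : realType} {n p : nat}.

Lemma is_derive_comp_grad {f : 'cV[R]_n -> R^o} {phi : 'cV[R]_p -> 'cV[R]_n}
    {y e : 'cV[R]_p} :
  (forall z j, derivable f z (ebasis j)) ->
  (forall j, {for phi y, continuous (partial f j)}) ->
  derivable phi y e ->
  is_derive y e (f \o phi) (dotv (grad f (phi y)) ('D_e phi y)).
Proof.
move=> f_partial f_cont phi_e.
set G := grad f (phi y); set D := 'D_e phi y.
pose Q h : 'cV[R]_n := h^-1 *: (phi (h *: e + y) - phi y).
pose r h : R := f (phi (h *: e + y)) - f (phi y) - dotv G (phi (h *: e + y) - phi y).
have QD : Q @ 0^' --> D := phi_e.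
have r_o : (fun h => h^-1 * r h) @ 0^' --> 0.
  apply/cvgrPdist_le => eps eps0.
  have D1 : 0 < `|D| + 1 by rewrite ltr_wpDl.
  have [d d0 f_approx] := first_order_approx f_partial _ f_cont _ (divr_gt0 eps0 D1).
  near=> h.
  have h0 : h != 0 by near: h; exact: nbhs_dnbhs_neq.
  have Q_le : `|Q h| <= `|D| + 1.
    rewrite -[Q h](subKr D) addrC; apply: le_trans (ler_normD _ _) _.
    rewrite normrN addrC lerD2l; near: h; exact: (cvgrPdist_le _ _).1 QD 1 ltr01.
  have QhQ : phi (h *: e + y) - phi y = h *: Q h by rewrite scalerA mulfV ?scale1r.
  have hQ_small : `|h *: Q h| < d.
    rewrite normrZ; apply: le_lt_trans (ler_wpM2l (normr_ge0 _) Q_le) _.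
    rewrite -ltr_pdivlMr //; near: h; exact: dnbhs0_lt (divr_gt0 d0 D1).
  have := f_approx _ hQ_small; rewrite -QhQ subrKC -/(r h) => r_le.
  rewrite sub0r normrN normrM normfV ler_pdivrMl ?normr_gt0 //.
  apply: le_trans r_le _.
  rewrite QhQ normrZ mulrCA ler_wpM2l ?normr_ge0 //.
  by rewrite mulrAC ler_pdivrMr // ler_wpM2l // ltW.
suff QDr : (fun h : R => h^-1 *: ((f \o phi \o shift y) (h *: e) - (f \o phi) y))
           @ 0^' --> dotv G D.
  by split; [apply/cvgP: QDr | exact: cvg_lim].
have -> : (fun h : R => h^-1 *: ((f \o phi \o shift y) (h *: e) - (f \o phi) y))
          = (fun h => h^-1 * r h + dotv G (Q h)).
  by apply/funext => h; rewrite /r /Q dotvZr -mulrDr subrK.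
by rewrite -[dotv G D]add0r; apply: cvgD r_o (cvg_dotvr G QD).
Unshelve. all: by end_near.
Qed.

Lemma cvg_slope_at_min_eq0 (k : R -> R) (l : R) :
  (\forall h \near 0, 0 <= k h) -> (fun h => h^-1 * k h) @ 0^' --> l -> l = 0.
Proof.
move=> k_ge0 kl; apply/eqP; rewrite eq_le; apply/andP; split.
- apply: (cvgr_to_le (cvg_dnbhs_at_left kl)).
  near=> h; apply: mulr_le0_ge0.
    by rewrite invr_le0 ltW//; near: h; exact: nbhs_left_lt.
  by near: h; rewrite near_withinE; apply: filterS k_ge0.
- apply: (cvgr_to_ge (cvg_dnbhs_at_right kl)).
  near=> h; apply: mulr_ge0.
    by rewrite invr_ge0 ltW//; near: h; exact: nbhs_right_gt.
  by near: h; rewrite near_withinE; apply: filterS k_ge0.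
Unshelve. all: by end_near.
Qed.

Lemma grad_comp_eq0_of_stationary {f : 'cV[R]_n -> R^o} {Psi : 'cV[R]_n -> \bar R}
    {phi : 'cV[R]_p -> 'cV[R]_n} {ystar : 'cV[R]_p} {W : set 'cV[R]_p}
    {v : 'cV[R]_n} :
  (forall z j, derivable f z (ebasis j)) ->
  (forall j, {for phi ystar, continuous (partial f j)}) ->
  (forall j, derivable phi ystar (ebasis j)) ->
  nbhs ystar W -> (forall y, W y -> Psi (phi y) \is a fin_num) ->
  (forall j, derivable (fun y => fine (Psi (phi y)) : R^o) ystar (ebasis j)) ->
  subdiff Psi (phi ystar) v -> grad f (phi ystar) + v = 0 ->
  grad (fun y => f (phi y) + fine (Psi (phi y)) : R^o) ystar = 0.
Proof.
move=> f_partial f_cont phi_partial W_ystar W_fin B_partial [Psi_fin Psi_sub] Gv0.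
apply/matrixP => i j; rewrite (ord1 j) !mxE /partial.
set e := ebasis i; set B := fun y => fine (Psi (phi y)) : R^o.
set G := grad f (phi ystar).
have vG : v = - G by apply/eqP; rewrite -addr_eq0 addrC Gv0.
have fphi := is_derive_comp_grad f_partial f_cont (phi_partial i).
have -> : (fun y => f (phi y) + B y : R^o) = (f \o phi) + B by [].
rewrite deriveD; [|by case: fphi | exact: B_partial].
rewrite derive_val addrC.
pose k h := B (h *: e + ystar) - B ystar + dotv G (phi (h *: e + ystar) - phi ystar).
apply: (@cvg_slope_at_min_eq0 k).
  have line_y : (fun h : R => h *: e + ystar) @ 0 --> ystar.
    rewrite -[X in _ --> X]add0r -(scale0r e).
    exact: cvgD (cvgZ cvg_id (cvg_cst e)) (cvg_cst _).
  near=> h; have Wh : W (h *: e + ystar) by near: h; exact: line_y _ W_ystar.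
  have := Psi_sub (phi (h *: e + ystar)).
  rewrite -(fineK Psi_fin) -(fineK (W_fin _ Wh)) -EFinD lee_fin vG dotvNl.
  by rewrite /k /B; lra.
have -> : (fun h => h^-1 * k h) =
          (fun h => h^-1 *: ((B \o shift ystar) (h *: e) - B ystar)
                    + dotv G (h^-1 *: (phi (h *: e + ystar) - phi ystar))).
  by apply/funext => h; rewrite /k dotvZr -mulrDr.
exact: cvgD (B_partial i) (cvg_dotvr G (phi_partial i)).
Unshelve. all: by end_near.
Qed.

End ChainRule.

Theorem lemma4 (R : realType) (n p : nat)
  (f : 'cV[R]_n -> R^o) (Psi : 'cV[R]_n -> \bar R)
  (M : set 'cV[R]_n) (phi : 'cV[R]_p -> 'cV[R]_n)
  (xstar : 'cV[R]_n) (ystar : 'cV[R]_p)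
  (U : set 'cV[R]_p) (c rho : R) :
  (* standing assumptions *)
  C1_on setT f ->
  (exists L : R, forall x y, enorm (grad f x - grad f y) <= L * enorm (x - y)) ->
  eproper Psi -> econvex Psi -> lower_semicontinuous Psi ->
  (* x* is stationary: 0 \in grad f(x* ) + \partial Psi(x* ) *)
  (exists2 v, subdiff Psi xstar v & grad f xstar + v = 0) ->
  partly_smooth Psi M phi ystar xstar ->
  let Fphi := fun y => (f (phi y) + fine (Psi (phi y)) : R^o) in
  nbhs ystar U ->
  (forall y, U y -> forall V, clarke_jac (grad Fphi) y V -> psd V) ->
  strongly_semismooth (grad Fphi) ystar ->
  0 < c -> 0 < rho <= 1 ->
  exists C : R, exists2 delta : R, 0 < delta &
    forall y, U y -> enorm (y - ystar) < delta ->
    forall V, clarke_jac (grad Fphi) y V ->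
    let g := grad Fphi y in
    let mu := c * enorm g `^ rho in
    let H := V + mu%:M in
    let d := enorm (y - ystar) in
    g != 0 ->
    forall q : 'cV[R]_p,
      enorm (H *m q + g) <= 10^-1 * Num.min (enorm g) (enorm g `^ (1 + rho)) ->
      enorm q <= 2 * d + mu^-1 * (C * d ^+ 2)
                 + 10^-1 * mu^-1 * enorm g `^ (1 + rho).
Proof.
move=> [_ f_C1] _ _ _ _ [v v_sub Gv0] Psi_smooth Fphi U_ystar U_psd.
move=> [_ [C [delta delta0 semismooth]]] c0 rho_itv.
have f_partial z j : derivable f z (ebasis j) by case: (f_C1 z I j).
have f_cont j : {for phi ystar, continuous (partial f j)} by case: (f_C1 (phi ystar) I j).
case: Psi_smooth => _ [[[[_ phi_C1] _] [_ [phi_ystar _]]] [[W W_ystar [W_fin [[_ B_C1] _]]] _]].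
have phi_partial j : derivable phi ystar (ebasis j) by case: (phi_C1 ystar I j).
have B_partial j : derivable (fun y => fine (Psi (phi y)) : R^o) ystar (ebasis j).
  by case: (B_C1 ystar W_ystar j).
rewrite -phi_ystar in v_sub Gv0.
have g0 : grad Fphi ystar = 0 := grad_comp_eq0_of_stationary
  f_partial f_cont phi_partial W_ystar W_fin B_partial v_sub Gv0.
exists C; exists delta => // y Uy yd V V_jac g mu H d g_neq0 q q_res.
have g_residual : enorm (g - V *m (y - ystar)) <= C * d ^+ 2.
  by move: (semismooth _ yd V); rewrite subrKC g0 subr0; apply.
have mu0 : 0 < mu.
  rewrite mulr_gt0 // powR_gt0 // lt_def enorm_ge0 andbT.
  by apply: contra g_neq0 => /eqP/enorm_eq0/eqP.
apply: le_trans (psd_shift_solution_le (U_psd y Uy V V_jac) mu0 q_res g_residual) _.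
rewrite lerD2l mulrA [mu^-1 * _]mulrC; apply: ler_wpM2l; last by rewrite ge_min lexx orbT.
by rewrite mulr_ge0 // invr_ge0 ltW.
Qed.
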